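(* The reductions $\to_w$ and $\to_{w\neg gcv} := \to_{wm}\cup\to_{we}$ of the silly substitution calculus are confluent.
   Context: Terms: $t,u,s ::= x \mid \lambda x.t \mid t\,u \mid t[x\backslash u]$, where $t[x\backslash u]$ is an explicit substitution binding $x$ in $t$; terms up to $\alpha$-renaming; $\mathrm{fv}(t[x\backslash u]) = (\mathrm{fv}(t)\setminus\{x\})\cup \mathrm{fv}(u)$. Values: $v ::= \lambda x.t$. Substitution contexts: $S ::= \langle\cdot\rangle \mid S[x\backslash u]$. Weak contexts: $W ::= \langle\cdot\rangle \mid W\,t \mid t\,W \mid t[x\backslash W] \mid W[x\backslash u]$. $W\langle\langle t\rangle\rangle$ denotes plugging $t$ in $W$ where $W$ does not capture free variables of $t$. Root rules: $S\langle \lambda x.t\rangle u \mapsto_m S\langle t[x\backslash u]\rangle$; $W\langle\langle x\rangle\rangle[x\backslash u] \mapsto_{e} W\langle\langle u\rangle\rangle[x\backslash u]$ ($W$ weak context); $t[x\backslash S\langle v\rangle] \mapsto_{gcv} S\langle t\rangle$ if $x\notin\mathrm{fv}(t)$. $\to_{wm},\to_{we},\to_{wgcv}$ are their closures under weak contexts; $\to_w$ is their union. A relation $\to$ is confluent if whenever $t\to^* u_1$ and $t\to^* u_2$ there is $s$ with $u_1\to^* s$ and $u_2\to^* s$. *)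

(* Silly substitution calculus (weak), terms in de Bruijn
   representation (= terms up to alpha-renaming). *)
From Stdlib Require Import Arith List Relations.
Import ListNotations.

(* t ::= x | \x.t | t u | t[x\u]; in [ES t u] (= t[x\u]) the body t is
   under one binder (index 0 = x), u is not. *)
Inductive term : Type :=
| Var : nat -> term
| Lam : term -> term
| App : term -> term -> term
| ES  : term -> term -> term.

Fixpoint lift (k c : nat) (t : term) : term :=
  match t with
  | Var n => if n <? c then Var n else Var (n + k)
  | Lam b => Lam (lift k (S c) b)
  | App t1 t2 => App (lift k c t1) (lift k c t2)
  | ES t1 t2 => ES (lift k (S c) t1) (lift k c t2)
  end.

(* Substitution contexts S ::= <.> | S[x\u].  A list [u1; ...; un] (head =
   outermost) denotes <.>[x_n\u_n]...[x_1\u_1]. *)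
Definition sctx := list term.

Fixpoint plugS (s : sctx) (t : term) : term :=
  match s with
  | nil => t
  | u :: s' => ES (plugS s' t) u
  end.

Inductive wctx : Type :=
| Hole : wctx
| WAppL : wctx -> term -> wctx
| WAppR : term -> wctx -> wctx
| WESR : term -> wctx -> wctx
| WESL : wctx -> term -> wctx.

Fixpoint plugW (w : wctx) (t : term) : term :=
  match w with
  | Hole => t
  | WAppL w' u => App (plugW w' t) u
  | WAppR u w' => App u (plugW w' t)
  | WESR u w' => ES u (plugW w' t)
  | WESL w' u => ES (plugW w' t) u
  end.

Fixpoint depth (w : wctx) : nat :=
  match w with
  | Hole => 0
  | WAppL w' _ => depth w'
  | WAppR _ w' => depth w'
  | WESR _ w' => depth w'
  | WESL w' _ => S (depth w')
  end.

(* S<\x.t> u  |->m  S<t[x\u]>   (u is moved under the binders of S) *)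
Inductive root_m : term -> term -> Prop :=
| RootM : forall (s : sctx) (t u : term),
    root_m (App (plugS s (Lam t)) u)
           (plugS s (ES t (lift (length s) 0 u))).

(* W<<x>>[x\u]  |->e  W<<u>>[x\u]   (the occurrence of x is the one bound by
   the explicit substitution, and u is not captured by W) *)
Inductive root_e : term -> term -> Prop :=
| RootE : forall (w : wctx) (u : term),
    root_e (ES (plugW w (Var (depth w))) u)
           (ES (plugW w (lift (S (depth w)) 0 u)) u).

(* t[x\S<v>]  |->gcv  S<t>  if x notin fv(t).  "x notin fv(t)" is expressed
   as t = lift 1 0 t0 (t0 is t with x removed from its scope). *)
Inductive root_gcv : term -> term -> Prop :=
| RootGcv : forall (s : sctx) (t0 b : term),
    root_gcv (ES (lift 1 0 t0) (plugS s (Lam b)))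
             (plugS s (lift (length s) 0 t0)).

Inductive wclos (R : term -> term -> Prop) : term -> term -> Prop :=
| WClos : forall (w : wctx) (t t' : term),
    R t t' -> wclos R (plugW w t) (plugW w t').

Definition step_wm := wclos root_m.
Definition step_we := wclos root_e.
Definition step_wgcv := wclos root_gcv.

Definition step_w (t t' : term) : Prop :=
  step_wm t t' \/ step_we t t' \/ step_wgcv t t'.

Definition step_wngcv (t t' : term) : Prop :=
  step_wm t t' \/ step_we t t'.

Definition confluent (R : term -> term -> Prop) : Prop :=
  forall t u1 u2,
    clos_refl_trans term R t u1 -> clos_refl_trans term R t u2 ->
    exists s, clos_refl_trans term R u1 s /\ clos_refl_trans term R u2 s.

(* A peak made of two weak steps closes with at most one step on each side,
   except that after an e-step the other step may have to be repeated, since e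
   duplicates the substituted term.  Hence e-steps, which decrease a weight
   where a variable bound by [x\u] weighs one more than [u], are confluent by
   Newman's lemma; the m- and gcv-steps are confluent by the diamond property
   of their reflexive closure; e-steps commute with them by Hindley's strip
   lemma; and the union is confluent by the Hindley-Rosen lemma. *)

From Stdlib Require Import Arith List Relations Lia.
From Stdlib Require Import Relations_2 Relations_2_facts.
From Stdlib Require Relations_3 Relations_3_facts.

(** * Abstract rewriting *)

Section AbstractRewriting.

Context {A : Type}.
Implicit Types R : relation A.

Lemma Rstar_hom {B} (f : A -> B) R (R' : relation B) :
  (forall x y, R x y -> Rstar B R' (f x) (f y)) ->
  forall x y, Rstar A R x y -> Rstar B R' (f x) (f y).
Proof.
  intros Hf x y H; induction H; [constructor|].
  eapply Rstar_transitive; eauto.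
Qed.

Lemma Rstar_clos_refl_trans R x y : Rstar A R x y <-> clos_refl_trans A R x y.
Proof.
  rewrite clos_rt_rt1n_iff; split; induction 1.
  - apply rt1n_refl.
  - eapply Relation_Operators.rt1n_trans; eassumption.
  - apply Rstar_0.
  - eapply Rstar_n; eassumption.
Qed.

Lemma Rstar_clos_refl R x y : Rstar A (clos_refl A R) x y <-> Rstar A R x y.
Proof.
  split; apply (Rstar_hom id); intros a b H.
  - destruct H; [now apply Rstar_contains_R | constructor].
  - now apply Rstar_contains_R, r_step.
Qed.

Lemma Rstar_union_Rstar R1 R2 x y :
  Rstar A (union A (Rstar A R1) (Rstar A R2)) x y <-> Rstar A (union A R1 R2) x y.
Proof.
  split; apply (Rstar_hom id); intros a b H.
  - destruct H as [H|H]; apply (Rstar_hom id) with (2 := H);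
      intros; apply Rstar_contains_R; [left|right]; assumption.
  - apply Rstar_contains_R.
    destruct H; [left|right]; apply Rstar_contains_R; assumption.
Qed.

Lemma Confluent_Rstar_equiv R R' :
  (forall x y, Rstar A R x y <-> Rstar A R' x y) ->
  Relations_3.Confluent A R -> Relations_3.Confluent A R'.
Proof.
  intros E C a b c Hb Hc.
  destruct (C a b c) as [d [Hbd Hcd]]; try apply E; auto.
  exists d; split; apply E; assumption.
Qed.

Lemma Confluent_same_relation R R' :
  (forall x y, R x y <-> R' x y) ->
  Relations_3.Confluent A R -> Relations_3.Confluent A R'.
Proof.
  intros E; apply Confluent_Rstar_equiv; split; apply (Rstar_hom id);
    intros; apply Rstar_contains_R, E; assumption.
Qed.

Lemma Confluent_refl_diamond R :
  (forall a b c, R a b -> R a c ->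
     exists d, clos_refl A R b d /\ clos_refl A R c d) ->
  Relations_3.Confluent A R.
Proof.
  intros D. apply (Confluent_Rstar_equiv (clos_refl A R)).
  - intros; apply Rstar_clos_refl.
  - apply Relations_3_facts.Strong_confluence.
    intros a b c [b' Hb|] [c' Hc|]; eauto using clos_refl.
Qed.

Lemma Noetherian_measure R (m : A -> nat) :
  (forall a b, R a b -> m b < m a) -> Relations_3.Noetherian A R.
Proof.
  intros Hm a.
  induction a as [a IH] using (well_founded_induction (well_founded_ltof A m)).
  constructor; intros b Hb; apply IH, Hm, Hb.
Qed.

Lemma Rstar_commute R1 R2 :
  (forall a b c, R1 a b -> R2 a c -> exists d, Rstar A R2 b d /\ clos_refl A R1 c d) ->
  forall a b c, Rstar A R1 a b -> Rstar A R2 a c ->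
    exists d, Rstar A R2 b d /\ Rstar A R1 c d.
Proof.
  intros H.
  assert (strip : forall a c, Rstar A R2 a c -> forall b, R1 a b ->
            exists d, Rstar A R2 b d /\ clos_refl A R1 c d).
  { induction 1 as [|a a' c Ha' Ha'c IH]; intros b Hb.
    - exists b; split; [constructor | now apply r_step].
    - destruct (H _ _ _ Hb Ha') as [d1 [Hbd1 Hd1]].
      destruct Hd1 as [d1 Hd1|].
      + destruct (IH _ Hd1) as [d [? ?]].
        exists d; split; [apply (Rstar_transitive A R2 b d1 d)|]; assumption.
      + exists c; split; [apply (Rstar_transitive A R2 b a' c)|]; auto using clos_refl. }
  intros a b c Hb; revert c. induction Hb as [|a b' b Hb' _ IH]; intros c Hc.
  - exists c; split; [assumption | constructor].
  - destruct (strip _ _ Hc _ Hb') as [d1 [Hd1 Hcd1]].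
    destruct (IH _ Hd1) as [d [? ?]]. exists d; split; [assumption|].
    destruct Hcd1; [econstructor|]; eauto.
Qed.

Lemma Confluent_union R1 R2 :
  Relations_3.Confluent A R1 -> Relations_3.Confluent A R2 ->
  (forall a b c, Rstar A R1 a b -> Rstar A R2 a c ->
     exists d, Rstar A R2 b d /\ Rstar A R1 c d) ->
  Relations_3.Confluent A (union A R1 R2).
Proof.
  intros C1 C2 C12.
  apply (Confluent_Rstar_equiv (union A (Rstar A R1) (Rstar A R2))).
  - intros; apply Rstar_union_Rstar.
  - apply Relations_3_facts.Strong_confluence.
    intros a b c [Hb|Hb] [Hc|Hc].
    + destruct (C1 a b c Hb Hc) as [d [? ?]]; exists d; split; left; assumption.
    + destruct (C12 a b c Hb Hc) as [d [? ?]]; exists d; split; [right|left]; assumption.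
    + destruct (C12 a c b Hc Hb) as [d [? ?]]; exists d; split; [left|right]; assumption.
    + destruct (C2 a b c Hb Hc) as [d [? ?]]; exists d; split; right; assumption.
Qed.

End AbstractRewriting.

Lemma confluent_Confluent (R : relation term) :
  Relations_3.Confluent term R -> confluent R.
Proof.
  intros C a b c Hb Hc.
  destruct (C a b c) as [d [? ?]]; try apply Rstar_clos_refl_trans; auto.
  exists d; split; apply Rstar_clos_refl_trans; assumption.
Qed.

(** * Renamings *)

Definition up (f : nat -> nat) : nat -> nat :=
  fun n => match n with 0 => 0 | S m => S (f m) end.

Fixpoint ren (f : nat -> nat) (t : term) : term :=
  match t with
  | Var n => Var (f n)
  | Lam b => Lam (ren (up f) b)
  | App a b => App (ren f a) (ren f b)
  | ES a b => ES (ren (up f) a) (ren f b)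
  end.

Fixpoint occurs (n : nat) (t : term) : Prop :=
  match t with
  | Var m => m = n
  | Lam b => occurs (S n) b
  | App a b => occurs n a \/ occurs n b
  | ES a b => occurs (S n) a \/ occurs n b
  end.

Lemma ren_ext_occurs t f g :
  (forall n, occurs n t -> f n = g n) -> ren f t = ren g t.
Proof.
  revert f g; induction t; intros f g H; simpl in *; f_equal;
    try (apply IHt || apply IHt1 || apply IHt2); auto;
    intros [|n] Hn; simpl; auto.
Qed.

Lemma ren_ext t f g : (forall n, f n = g n) -> ren f t = ren g t.
Proof. intros; apply ren_ext_occurs; auto. Qed.

Lemma ren_comp t f g : ren f (ren g t) = ren (fun n => f (g n)) t.
Proof.
  revert f g; induction t; intros f g; simpl; f_equal; auto;
    (rewrite IHt || rewrite IHt1); apply ren_ext; intros [|n]; reflexivity.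
Qed.

Lemma ren_id t : ren (fun n => n) t = t.
Proof.
  induction t; simpl; f_equal; auto;
    (rewrite <- IHt at 2 || rewrite <- IHt1 at 2);
    apply ren_ext; intros [|n]; reflexivity.
Qed.

Lemma lift_ren t k c : lift k c t = ren (fun n => if n <? c then n else n + k) t.
Proof.
  revert c; induction t; intros c; simpl; [now destruct (n <? c) | ..].
  all: f_equal; auto; (rewrite IHt || rewrite IHt1); apply ren_ext;
    intros [|n]; simpl; auto; change (S n <? S c) with (n <? c); now destruct (n <? c).
Qed.

Lemma lift0_ren t k : lift k 0 t = ren (fun n => k + n) t.
Proof. rewrite lift_ren; apply ren_ext; intros; simpl; lia. Qed.

Lemma ren_S_up r f : ren (up f) (ren S r) = ren S (ren f r).
Proof. rewrite !ren_comp; apply ren_ext; reflexivity. Qed.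

Lemma ren_add_S r d : ren (fun n => d + n) (ren S r) = ren (fun n => S d + n) r.
Proof. rewrite ren_comp; apply ren_ext; intros; lia. Qed.

Lemma occurs_ren_inv t n f :
  occurs n (ren f t) -> exists m, occurs m t /\ f m = n.
Proof.
  revert n f; induction t; intros k f H; simpl in *.
  - eauto.
  - destruct (IHt _ _ H) as [[|m] [Hm E]]; simpl in E; try discriminate.
    injection E as <-; eauto.
  - destruct H as [H|H]; [destruct (IHt1 _ _ H) | destruct (IHt2 _ _ H)];
      firstorder.
  - destruct H as [H|H].
    + destruct (IHt1 _ _ H) as [[|m] [Hm E]]; simpl in E; try discriminate.
      injection E as <-; eauto.
    + destruct (IHt2 _ _ H); firstorder.
Qed.

Fixpoint upn (n : nat) (f : nat -> nat) : nat -> nat :=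
  match n with 0 => f | S n => upn n (up f) end.

Lemma upn_spec n f m : upn n f m = if m <? n then m else n + f (m - n).
Proof.
  revert f m; induction n; intros f m; simpl.
  - rewrite Nat.sub_0_r; reflexivity.
  - rewrite IHn. destruct (Nat.ltb_spec m n), (Nat.ltb_spec m (S n)); try lia.
    + replace m with n by lia. rewrite Nat.sub_diag; simpl; lia.
    + replace (m - n) with (S (m - S n)) by lia. simpl; lia.
Qed.

Lemma upn_add n f m : upn n f (n + m) = n + f m.
Proof.
  rewrite upn_spec. destruct (Nat.ltb_spec (n + m) n); [lia|].
  f_equal; f_equal; lia.
Qed.

Fixpoint rens (f : nat -> nat) (s : sctx) : sctx :=
  match s with nil => nil | u :: s' => ren f u :: rens (up f) s' end.

Lemma rens_length s f : length (rens f s) = length s.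
Proof. revert f; induction s; simpl; auto. Qed.

Lemma ren_plugS s f t :
  ren f (plugS s t) = plugS (rens f s) (ren (upn (length s) f) t).
Proof. revert f; induction s; intros f; simpl; f_equal; auto. Qed.

Lemma plugS_app s1 s2 t : plugS (s1 ++ s2) t = plugS s1 (plugS s2 t).
Proof. induction s1; simpl; f_equal; auto. Qed.

Lemma plugS_Lam_inj s1 s2 t1 t2 :
  plugS s1 (Lam t1) = plugS s2 (Lam t2) -> s1 = s2 /\ t1 = t2.
Proof.
  revert s2; induction s1; destruct s2; simpl; intros H; try discriminate.
  - injection H; auto.
  - injection H as E ->. destruct (IHs1 _ E) as [-> ->]; auto.
Qed.

Lemma occurs_plugS s k X : occurs (k + length s) X -> occurs k (plugS s X).
Proof.
  revert k; induction s; simpl; intros k H.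
  - rewrite Nat.add_0_r in H; exact H.
  - left. apply IHs. rewrite Nat.add_succ_comm; exact H.
Qed.

Lemma occurs_plugS_inv s k X Y :
  occurs k (plugS s X) -> occurs k (plugS s Y) \/ occurs (k + length s) X.
Proof.
  revert k; induction s; simpl; intros k H.
  - rewrite Nat.add_0_r; auto.
  - destruct H as [H|H]; auto.
    destruct (IHs _ H); auto. right. rewrite <- Nat.add_succ_comm; assumption.
Qed.

(* [subst1 k r] relates [W<<k>>] to [W<<r>>], for every weak context [W]. *)
Inductive subst1 : nat -> term -> term -> term -> Prop :=
| subst1_Var k r : subst1 k r (Var k) r
| subst1_AppL k r a a' b : subst1 k r a a' -> subst1 k r (App a b) (App a' b)
| subst1_AppR k r a b b' : subst1 k r b b' -> subst1 k r (App a b) (App a b')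
| subst1_ESL k r t t' u :
    subst1 (S k) (ren S r) t t' -> subst1 k r (ES t u) (ES t' u)
| subst1_ESR k r t u u' : subst1 k r u u' -> subst1 k r (ES t u) (ES t u').

Lemma subst1_occurs k r T T' : subst1 k r T T' -> occurs k T.
Proof. induction 1; simpl; auto. Qed.

Lemma subst1_occurs_inv k r T T' :
  subst1 k r T T' -> forall n, occurs n T' -> occurs n T \/ occurs n r.
Proof.
  induction 1 as [| ? ? ? ? ? _ IH | ? ? ? ? ? _ IH | ? ? ? ? ? _ IH | ? ? ? ? ? _ IH];
    simpl; intros n Hn; auto;
    destruct Hn as [Hn|Hn]; auto; destruct (IH _ Hn) as [|Hr]; auto.
  destruct (occurs_ren_inv _ _ _ Hr) as [m [Hm [= <-]]]; auto.
Qed.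

Lemma subst1_ren k r T T' :
  subst1 k r T T' -> forall f, subst1 (f k) (ren f r) (ren f T) (ren f T').
Proof.
  induction 1; intros f; simpl; constructor; auto.
  rewrite <- ren_S_up. exact (IHsubst1 (up f)).
Qed.

Lemma subst1_plugW w k r :
  subst1 k r (plugW w (Var (k + depth w))) (plugW w (ren (fun n => depth w + n) r)).
Proof.
  revert k r; induction w; intros k r; cbn [plugW depth]; try (constructor; auto).
  - rewrite Nat.add_0_r, ren_id. constructor.
  - rewrite <- ren_add_S, <- Nat.add_succ_comm. apply IHw.
Qed.

Lemma subst1_plugW_inv k r T T' :
  subst1 k r T T' -> exists w,
    T = plugW w (Var (k + depth w)) /\ T' = plugW w (ren (fun n => depth w + n) r).
Proof.
  induction 1 as [k r | | | k r t t' u _ [w [-> ->]] | ];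
    try destruct IHsubst1 as [w [-> ->]].
  - exists Hole; simpl. rewrite Nat.add_0_r, ren_id; auto.
  - exists (WAppL w b); auto.
  - exists (WAppR a w); auto.
  - exists (WESL w u); cbn [plugW depth]. rewrite ren_add_S, Nat.add_succ_comm; auto.
  - exists (WESR t w); auto.
Qed.

Lemma subst1_plugS_Lam s k r t T' :
  subst1 k r (plugS s (Lam t)) T' -> exists s', length s' = length s /\
    T' = plugS s' (Lam t) /\ forall X, subst1 k r (plugS s X) (plugS s' X).
Proof.
  revert k r T'; induction s as [|u s IH]; simpl; intros k r T' H;
    inversion H as [| | | ? ? ? t' ? Ht | ? ? ? ? u' Hu]; subst.
  - destruct (IH _ _ _ Ht) as [s' [L [-> F]]].
    exists (u :: s'); simpl; repeat split; auto. intros; constructor; auto.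
  - exists (u' :: s); simpl; repeat split; auto. intros; apply subst1_ESR; auto.
Qed.

Lemma subst1_plugS s k r X X' :
  subst1 (length s + k) (ren (fun n => length s + n) r) X X' ->
  subst1 k r (plugS s X) (plugS s X').
Proof.
  revert k r; induction s; simpl; intros k r H.
  - rewrite ren_id in H; exact H.
  - constructor. apply IHs. rewrite ren_add_S, <- Nat.add_succ_comm. exact H.
Qed.

Lemma subst1_diamond j r T T1 :
  subst1 j r T T1 -> forall k q T2, subst1 k q T T2 ->
  (j = k /\ (r = q -> T1 = T2)) \/
  exists T3, subst1 k q T1 T3 /\ subst1 j r T2 T3.
Proof.
  induction 1 as [| ? ? ? ? ? H1 IH | ? ? ? ? ? H1 IH | ? ? ? ? ? H1 IH
                  | ? ? ? ? ? H1 IH];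
    intros k' q T2 H2; inversion H2 as [| ? ? ? a2 ? H2' | ? ? ? ? b2 H2'
                                         | ? ? ? t2 ? H2' | ? ? ? ? u2 H2']; subst;
    try (right; eexists; split; constructor; eassumption);
    try (left; split; auto; fail);
    destruct (IH _ _ _ H2') as [[E F]|[T3 [A B]]];
    try (left; split; [lia | intros ->; f_equal; auto]);
    right; eexists; split; constructor; eassumption.
Qed.

Lemma subst1_subst1 k r T T1 :
  subst1 k r T T1 -> forall j q r', subst1 j q r r' ->
  exists T2, subst1 k r' T T2 /\ subst1 j q T1 T2.
Proof.
  induction 1; intros j q r' Hr;
    [exists r'; split; [constructor | assumption] | ..].
  all: edestruct IHsubst1 as [T2 [A B]]; [eauto using subst1_ren |];
    eexists; split; constructor; eassumption.
Qed.

Inductive kind := Km | Ke | Kg.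

(* [strengthen n] removes the binder 0, which must not occur, and lifts by [n]. *)
Definition strengthen (n : nat) : nat -> nat := fun m => n + pred m.

Lemma ren_strengthen_S r n : ren (strengthen n) (ren S r) = ren (fun m => n + m) r.
Proof. rewrite ren_comp; apply ren_ext; reflexivity. Qed.

Inductive kroot : kind -> term -> term -> Prop :=
| kroot_m s t u :
    kroot Km (App (plugS s (Lam t)) u)
             (plugS s (ES t (ren (fun n => length s + n) u)))
| kroot_e t t' u : subst1 0 (ren S u) t t' -> kroot Ke (ES t u) (ES t' u)
| kroot_gcv s b T : ~ occurs 0 T ->
    kroot Kg (ES T (plugS s (Lam b))) (plugS s (ren (strengthen (length s)) T)).

Inductive wstep (k : kind) : term -> term -> Prop :=
| wstep_root t t' : kroot k t t' -> wstep k t t'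
| wstep_AppL a a' b : wstep k a a' -> wstep k (App a b) (App a' b)
| wstep_AppR a b b' : wstep k b b' -> wstep k (App a b) (App a b')
| wstep_ESL a a' b : wstep k a a' -> wstep k (ES a b) (ES a' b)
| wstep_ESR a b b' : wstep k b b' -> wstep k (ES a b) (ES a b').

Lemma kroot_ren k t t' : kroot k t t' -> forall f, kroot k (ren f t) (ren f t').
Proof.
  destruct 1 as [s t u | t t' u H | s b T H]; intros f; simpl; rewrite ?ren_plugS; simpl.
  - replace (ren (upn (length s) f) (ren (fun n => length s + n) u))
      with (ren (fun n => length (rens f s) + n) (ren f u)).
    + apply kroot_m.
    + rewrite !ren_comp, rens_length. apply ren_ext; intros n; symmetry; apply upn_add.
  - constructor. rewrite <- ren_S_up. exact (subst1_ren _ _ _ _ H (up f)).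
  - replace (ren (upn (length s) f) (ren (strengthen (length s)) T))
      with (ren (strengthen (length (rens f s))) (ren (up f) T)).
    + apply kroot_gcv. intros Hc.
      destruct (occurs_ren_inv _ _ _ Hc) as [[|m] [Hm E]]; [auto | discriminate].
    + rewrite !ren_comp, rens_length. apply ren_ext_occurs.
      intros [|n] Hn; [contradiction | symmetry; apply upn_add].
Qed.

Lemma wstep_ren k t t' : wstep k t t' -> forall f, wstep k (ren f t) (ren f t').
Proof.
  induction 1; intros f; simpl.
  - constructor; apply kroot_ren; assumption.
  - apply wstep_AppL; auto.
  - apply wstep_AppR; auto.
  - apply wstep_ESL; auto.
  - apply wstep_ESR; auto.
Qed.

Lemma kroot_occurs_inv k t t' : kroot k t t' -> forall n, occurs n t' -> occurs n t.
Proof.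
  destruct 1 as [s t u | t t' u H | s b T H]; intros n Hn.
  - destruct (occurs_plugS_inv _ _ _ (Lam t) Hn) as [H|[H|H]]; simpl; auto.
    + left. apply occurs_plugS. exact H.
    + right. destruct (occurs_ren_inv _ _ _ H) as [m [Hm E]].
      replace n with m by lia; assumption.
  - simpl in *. destruct Hn as [Hn|Hn]; auto.
    destruct (subst1_occurs_inv _ _ _ _ H _ Hn) as [?|Hu]; auto.
    destruct (occurs_ren_inv _ _ _ Hu) as [m [Hm [= <-]]]; auto.
  - simpl. destruct (occurs_plugS_inv _ _ _ (Lam b) Hn) as [H0|H0]; auto.
    destruct (occurs_ren_inv _ _ _ H0) as [[|m] [Hm E]]; [contradiction|].
    unfold strengthen in E; simpl in E. replace n with m by lia; auto.
Qed.

Lemma wstep_occurs_inv k t t' : wstep k t t' -> forall n, occurs n t' -> occurs n t.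
Proof.
  induction 1; simpl; intros n Hn; [eapply kroot_occurs_inv; eassumption | ..];
    destruct Hn; auto.
Qed.

Lemma wstep_plugS k s X X' : wstep k X X' -> wstep k (plugS s X) (plugS s X').
Proof. induction s; simpl; intros; [|apply wstep_ESL]; auto. Qed.

Lemma wstep_plugW k w X X' : wstep k X X' -> wstep k (plugW w X) (plugW w X').
Proof.
  induction w; simpl; intros;
    [ | apply wstep_AppL | apply wstep_AppR | apply wstep_ESR | apply wstep_ESL ]; auto.
Qed.

Lemma subst1_wstep k r T T1 :
  subst1 k r T T1 -> forall kd r', wstep kd r r' ->
  exists T2, subst1 k r' T T2 /\ wstep kd T1 T2.
Proof.
  induction 1; intros kd r' Hr;
    [exists r'; split; [constructor | assumption] | ..].
  all: edestruct IHsubst1 as [T2 [A B]]; [eauto using wstep_ren |].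
  - exists (App T2 b); split; [constructor | apply wstep_AppL]; assumption.
  - exists (App a T2); split; [constructor | apply wstep_AppR]; assumption.
  - exists (ES T2 u); split; [constructor | apply wstep_ESL]; assumption.
  - exists (ES t T2); split; [constructor | apply wstep_ESR]; assumption.
Qed.

(* A step from [S<\x.t>] happens inside [S]; a gcv step there erases a binder
   of [S], whence the renaming [g] of what is plugged in. *)
Lemma wstep_plugS_Lam k s t r :
  wstep k (plugS s (Lam t)) r ->
  exists s' g, r = plugS s' (ren g (Lam t)) /\
    (forall n, g (length s + n) = length s' + n) /\
    forall X, (forall n, occurs n X -> n < length s -> occurs n (Lam t)) ->
      wstep k (plugS s X) (plugS s' (ren g X)).
Proof.
  revert t r; induction s as [|a s0 IH]; intros t r H; cbn [plugS length] in *.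
  - inversion H as [? ? Hr | | | | ]; inversion Hr.
  - inversion H as [? ? Hr | | | ? a' ? Ha | ? ? a' Ha]; subst.
    + inversion Hr as [| ? t' ? Ht | s b T Hn]; subst.
      * destruct (subst1_plugS_Lam _ _ _ _ _ Ht) as [s0' [L [-> F]]].
        exists (a :: s0'), (fun n => n); cbn [plugS length]. rewrite ren_id.
        split; [reflexivity | split; [intros; rewrite L; lia |]].
        intros X _. rewrite ren_id. apply wstep_root, kroot_e, F.
      * exists (s ++ rens (strengthen (length s)) s0),
               (upn (length s0) (strengthen (length s))).
        split; [|split].
        -- rewrite ren_plugS, plugS_app. reflexivity.
        -- intros n. rewrite length_app, rens_length.
           replace (S (length s0) + n) with (length s0 + S n) by lia.
           rewrite upn_add. unfold strengthen; simpl; lia.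
        -- intros X HX. rewrite plugS_app, <- ren_plugS. apply wstep_root, kroot_gcv.
           intros Hc. destruct (occurs_plugS_inv _ _ _ (Lam t) Hc) as [Hc'|Hc']; auto.
           apply Hn, occurs_plugS, (HX _ Hc'). simpl; lia.
    + destruct (IH _ _ Ha) as [s0' [g [-> [G F]]]].
      exists (a :: s0'), g; cbn [plugS length].
      split; [reflexivity | split].
      * intros n. replace (S (length s0) + n) with (length s0 + S n) by lia.
        rewrite G. simpl; lia.
      * intros X HX. apply wstep_ESL, F. intros n Hn Hl. apply HX; auto; lia.
    + exists (a' :: s0), (fun n => n); cbn [plugS length]. rewrite ren_id.
      split; [reflexivity | split; [reflexivity |]].
      intros X _. rewrite ren_id. apply wstep_ESR; assumption.
Qed.

(** * Local commutation *)

(* An e-step can duplicate another redex; m- and gcv-steps never do. *)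
Definition copies (k : kind) (R : relation term) : relation term :=
  match k with Ke => Rstar term R | _ => clos_refl term R end.

Lemma copies_refl k R x : copies k R x x.
Proof. destruct k; [apply r_refl | apply Rstar_0 | apply r_refl]. Qed.

Lemma copies_one k R x y : R x y -> copies k R x y.
Proof.
  destruct k; simpl; intros; [apply r_step | apply Rstar_contains_R | apply r_step]; auto.
Qed.

Lemma copies_map k R R' (f : term -> term) :
  (forall x y, R x y -> R' (f x) (f y)) ->
  forall x y, copies k R x y -> copies k R' (f x) (f y).
Proof.
  destruct k; simpl; intros Hf x y H.
  2: { apply (Rstar_hom f) with (2 := H); intros; apply Rstar_contains_R; auto. }
  all: destruct H; [apply r_step; auto | apply r_refl].
Qed.

Lemma kroot_subst1_commute k T T2 j r T' :
  kroot k T T2 -> subst1 j r T T' ->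
  exists T3, Rstar term (wstep k) T' T3 /\ copies k (subst1 j r) T2 T3.
Proof.
  intros HT Ho; destruct HT as [s t u | t t2 u Ht | s b T Hn].
  - inversion Ho as [| ? ? ? a' ? Ha | ? ? ? ? u' Hu | |]; subst.
    + destruct (subst1_plugS_Lam _ _ _ _ _ Ha) as [s' [L [-> F]]].
      exists (plugS s' (ES t (ren (fun n => length s' + n) u))); split.
      * apply Rstar_contains_R, wstep_root, kroot_m.
      * apply copies_one. rewrite L. apply F.
    + exists (plugS s (ES t (ren (fun n => length s + n) u'))); split.
      * apply Rstar_contains_R, wstep_root, kroot_m.
      * apply copies_one, subst1_plugS, subst1_ESR, subst1_ren, Hu.
  - inversion Ho as [| | | ? ? ? t' ? Ht' | ? ? ? ? u' Hu]; subst.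
    + destruct (subst1_diamond _ _ _ _ Ht' _ _ _ Ht) as [[E _]|[T3 [A B]]];
        [discriminate |].
      exists (ES T3 u); split.
      * apply Rstar_contains_R, wstep_root, kroot_e, A.
      * apply copies_one, subst1_ESL, B.
    + destruct (subst1_subst1 _ _ _ _ Ht _ _ _ (subst1_ren _ _ _ _ Hu S))
        as [T3 [A B]].
      exists (ES T3 u'); split.
      * apply Rstar_contains_R, wstep_root, kroot_e, A.
      * apply Rstar_n with (ES t2 u'); [apply subst1_ESR, Hu |].
        apply Rstar_contains_R, subst1_ESL, B.
  - inversion Ho as [| | | ? ? ? t' ? Ht' | ? ? ? ? v' Hv]; subst.
    + exists (plugS s (ren (strengthen (length s)) t')); split.
      * apply Rstar_contains_R, wstep_root, kroot_gcv. intros Hc.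
        destruct (subst1_occurs_inv _ _ _ _ Ht' _ Hc) as [?|Hc']; [auto|].
        destruct (occurs_ren_inv _ _ _ Hc') as [m [_ E]]; discriminate.
      * apply copies_one, subst1_plugS. rewrite <- ren_strengthen_S.
        exact (subst1_ren _ _ _ _ Ht' (strengthen (length s))).
    + destruct (subst1_plugS_Lam _ _ _ _ _ Hv) as [s' [L [-> F]]].
      exists (plugS s' (ren (strengthen (length s')) T)); split.
      * apply Rstar_contains_R, wstep_root, kroot_gcv, Hn.
      * apply copies_one. rewrite L. apply F.
Qed.

Lemma wstep_subst1_commute k T T2 :
  wstep k T T2 -> forall j r T', subst1 j r T T' ->
  exists T3, Rstar term (wstep k) T' T3 /\ copies k (subst1 j r) T2 T3.
Proof.
  induction 1 as [T T2 HT | a a2 b Ha IH | a b b2 Hb IH | a a2 b Ha IH | a b b2 Hb IH];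
    intros j r T' Ho; [eapply kroot_subst1_commute; eassumption | ..];
    inversion Ho as [| ? ? ? a' ? Ha' | ? ? ? ? b' Hb' | ? ? ? a' ? Ha' | ? ? ? ? b' Hb'];
    subst.
  all: try (edestruct IH as [T3 [A B]]; [eassumption |]).
  - exists (App T3 b); split.
    + apply (Rstar_hom (fun x => App x b)) with (2 := A); intros.
      apply Rstar_contains_R, wstep_AppL; assumption.
    + apply (copies_map _ _ _ (fun x => App x b)) with (2 := B); constructor; auto.
  - exists (App a2 b'); split;
      [apply Rstar_contains_R, wstep_AppL | apply copies_one, subst1_AppR]; assumption.
  - exists (App a' b2); split;
      [apply Rstar_contains_R, wstep_AppR | apply copies_one, subst1_AppL]; assumption.
  - exists (App a T3); split.
    + apply (Rstar_hom (fun x => App a x)) with (2 := A); intros.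
      apply Rstar_contains_R, wstep_AppR; assumption.
    + apply (copies_map _ _ _ (fun x => App a x)) with (2 := B); constructor; auto.
  - exists (ES T3 b); split.
    + apply (Rstar_hom (fun x => ES x b)) with (2 := A); intros.
      apply Rstar_contains_R, wstep_ESL; assumption.
    + apply (copies_map _ _ _ (fun x => ES x b)) with (2 := B); constructor; auto.
  - exists (ES a2 b'); split;
      [apply Rstar_contains_R, wstep_ESL | apply copies_one, subst1_ESR]; assumption.
  - exists (ES a' b2); split;
      [apply Rstar_contains_R, wstep_ESR | apply copies_one, subst1_ESL]; assumption.
  - exists (ES a T3); split.
    + apply (Rstar_hom (fun x => ES a x)) with (2 := A); intros.
      apply Rstar_contains_R, wstep_ESR; assumption.
    + apply (copies_map _ _ _ (fun x => ES a x)) with (2 := B); constructor; auto.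
Qed.

Definition peak_joinable (k1 k2 : kind) (b c : term) : Prop :=
  exists d, copies k1 (wstep k2) b d /\ copies k2 (wstep k1) c d.

Lemma peak_joinable_sym k1 k2 b c :
  peak_joinable k1 k2 b c -> peak_joinable k2 k1 c b.
Proof. intros [d [? ?]]; exists d; split; assumption. Qed.

Lemma peak_joinable_refl k1 k2 b : peak_joinable k1 k2 b b.
Proof. exists b; split; apply copies_refl. Qed.

Lemma peak_joinable_one k1 k2 b c d :
  wstep k2 b d -> wstep k1 c d -> peak_joinable k1 k2 b c.
Proof. intros; exists d; split; apply copies_one; assumption. Qed.

Lemma m_redex_join s t u k c :
  wstep k (App (plugS s (Lam t)) u) c ->
  peak_joinable Km k (plugS s (ES t (ren (fun n => length s + n) u))) c.
Proof.
  intros Hc; inversion Hc as [? ? Hr | ? a' ? Ha | ? ? u' Hu | |]; subst.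
  - remember (App (plugS s (Lam t)) u) as a eqn:Ea.
    destruct Hr as [s' t' u' | |]; try discriminate.
    injection Ea as E ->.
    destruct (plugS_Lam_inj _ _ _ _ E) as [-> ->]. apply peak_joinable_refl.
  - destruct (wstep_plugS_Lam _ _ _ _ Ha) as [s' [g [-> [Hg F]]]].
    apply peak_joinable_one
      with (plugS s' (ES (ren (up g) t) (ren (fun n => length s' + n) u))).
    + replace (ES (ren (up g) t) (ren (fun n => length s' + n) u))
        with (ren g (ES t (ren (fun n => length s + n) u))).
      * apply F. intros n [Hn|Hn] Hl; [exact Hn|].
        destruct (occurs_ren_inv _ _ _ Hn) as [m [_ E]]; lia.
      * simpl. f_equal. rewrite ren_comp. apply ren_ext; auto.
    + simpl. apply wstep_root, kroot_m.
  - apply peak_joinable_one with (plugS s (ES t (ren (fun n => length s + n) u'))).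
    + apply wstep_plugS, wstep_ESR, wstep_ren, Hu.
    + apply wstep_root, kroot_m.
Qed.

Lemma e_redex_join t t' u k c :
  subst1 0 (ren S u) t t' -> wstep k (ES t u) c -> peak_joinable Ke k (ES t' u) c.
Proof.
  intros Ht Hc; inversion Hc as [? ? Hr | | | ? t2 ? Ht2 | ? ? u2 Hu]; subst.
  - remember (ES t u) as a eqn:Ea.
    destruct Hr as [| t1 t2 u1 Ht2 | s v T Hn]; try discriminate;
      injection Ea as Et Eu; subst.
    + destruct (subst1_diamond _ _ _ _ Ht _ _ _ Ht2) as [[_ E]|[T3 [A B]]].
      * rewrite E by reflexivity. apply peak_joinable_refl.
      * apply peak_joinable_one with (ES T3 u); apply wstep_root, kroot_e; assumption.
    + exfalso. apply Hn. eapply subst1_occurs; eassumption.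
  - destruct (wstep_subst1_commute _ _ _ Ht2 _ _ _ Ht) as [T3 [A B]].
    exists (ES T3 u); split.
    + apply (Rstar_hom (fun x => ES x u)) with (2 := A); intros.
      apply Rstar_contains_R, wstep_ESL; assumption.
    + apply (copies_map _ _ _ (fun x => ES x u)) with (2 := B); intros.
      apply wstep_root, kroot_e; assumption.
  - destruct (subst1_wstep _ _ _ _ Ht _ _ (wstep_ren _ _ _ Hu S)) as [T2 [A B]].
    exists (ES T2 u2); split.
    + apply Rstar_n with (ES T2 u); [apply wstep_ESL, B |].
      apply Rstar_contains_R, wstep_ESR, Hu.
    + apply copies_one, wstep_root, kroot_e, A.
Qed.

Lemma gcv_redex_join s v T k c :
  ~ occurs 0 T -> wstep k (ES T (plugS s (Lam v))) c ->
  peak_joinable Kg k (plugS s (ren (strengthen (length s)) T)) c.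
Proof.
  intros Hn Hc; inversion Hc as [? ? Hr | | | ? T2 ? HT | ? ? v2 Hv]; subst.
  - remember (ES T (plugS s (Lam v))) as a eqn:Ea.
    destruct Hr as [| T1 T2 u HT | s' v' T1 _]; try discriminate;
      injection Ea as ET E; subst.
    + exfalso. apply Hn. eapply subst1_occurs; eassumption.
    + destruct (plugS_Lam_inj _ _ _ _ E) as [-> ->]. apply peak_joinable_refl.
  - apply peak_joinable_one with (plugS s (ren (strengthen (length s)) T2)).
    + apply wstep_plugS, wstep_ren, HT.
    + apply wstep_root, kroot_gcv. intros Hc'. apply Hn.
      eapply wstep_occurs_inv; eassumption.
  - destruct (wstep_plugS_Lam _ _ _ _ Hv) as [s' [g [-> [Hg F]]]].
    apply peak_joinable_one with (plugS s' (ren (strengthen (length s')) T)).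
    + replace (ren (strengthen (length s')) T)
        with (ren g (ren (strengthen (length s)) T)).
      * apply F. intros n Hn' Hl.
        destruct (occurs_ren_inv _ _ _ Hn') as [m [_ E]]. unfold strengthen in E; lia.
      * rewrite ren_comp. apply ren_ext_occurs. intros [|m] Hm; [contradiction|].
        apply Hg.
    + apply wstep_root, kroot_gcv, Hn.
Qed.

Lemma kroot_wstep_join k1 a b k2 c :
  kroot k1 a b -> wstep k2 a c -> peak_joinable k1 k2 b c.
Proof.
  destruct 1; [apply m_redex_join | apply e_redex_join | apply gcv_redex_join]; assumption.
Qed.

Lemma peak_joinable_map (f : term -> term) k1 k2 b c :
  (forall k x y, wstep k x y -> wstep k (f x) (f y)) ->
  peak_joinable k1 k2 b c -> peak_joinable k1 k2 (f b) (f c).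
Proof.
  intros Hf [d [Hb Hc]]; exists (f d); split; eapply copies_map; eauto.
Qed.

Lemma wstep_local_commute k1 a b k2 c :
  wstep k1 a b -> wstep k2 a c -> peak_joinable k1 k2 b c.
Proof.
  intros Hb; revert k2 c.
  induction Hb as [a b Hr | a a1 e Ha IH | e a a1 Ha IH | a a1 e Ha IH | e a a1 Ha IH];
    intros k2 c Hc; [eapply kroot_wstep_join; eassumption | ..];
    inversion Hc as [? ? Hr | ? a2 ? Ha2 | ? ? a2 Ha2 | ? a2 ? Ha2 | ? ? a2 Ha2]; subst;
    try (apply peak_joinable_sym; eapply kroot_wstep_join; [eassumption|];
         constructor; assumption).
  - apply (peak_joinable_map (fun x => App x e)); [intros; apply wstep_AppL |]; auto.
  - apply peak_joinable_one with (App a1 a2); constructor; assumption.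
  - apply peak_joinable_one with (App a2 a1); constructor; assumption.
  - apply (peak_joinable_map (fun x => App e x)); [intros; apply wstep_AppR |]; auto.
  - apply (peak_joinable_map (fun x => ES x e)); [intros; apply wstep_ESL |]; auto.
  - apply peak_joinable_one with (ES a1 a2); constructor; assumption.
  - apply peak_joinable_one with (ES a2 a1); constructor; assumption.
  - apply (peak_joinable_map (fun x => ES e x)); [intros; apply wstep_ESR |]; auto.
Qed.

(** * Termination of e-steps *)

Definition scons (c : nat) (rho : nat -> nat) : nat -> nat :=
  fun n => match n with 0 => c | S m => rho m end.

Fixpoint weight (rho : nat -> nat) (t : term) : nat :=
  match t with
  | Var n => rho n
  | Lam _ => 0
  | App a b => weight rho a + weight rho b
  | ES a b => weight (scons (S (weight rho b)) rho) a + weight rho b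
  end.

Lemma weight_mono t rho1 rho2 :
  (forall n, rho1 n <= rho2 n) -> weight rho1 t <= weight rho2 t.
Proof.
  revert rho1 rho2; induction t; intros rho1 rho2 H; simpl; auto.
  - specialize (IHt1 rho1 rho2 H); specialize (IHt2 rho1 rho2 H); lia.
  - assert (weight rho1 t2 <= weight rho2 t2) by auto.
    assert (weight (scons (S (weight rho1 t2)) rho1) t1
            <= weight (scons (S (weight rho2 t2)) rho2) t1)
      by (apply IHt1; intros [|n]; simpl; auto; lia).
    lia.
Qed.

Lemma weight_ext t rho1 rho2 :
  (forall n, rho1 n = rho2 n) -> weight rho1 t = weight rho2 t.
Proof.
  intros H; apply Nat.le_antisymm; apply weight_mono; intros n; rewrite H; auto.
Qed.

Lemma weight_ren t rho f : weight rho (ren f t) = weight (fun n => rho (f n)) t.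
Proof.
  revert rho f; induction t; intros rho f; simpl; auto.
  rewrite IHt1, IHt2. f_equal. apply weight_ext. intros [|n]; reflexivity.
Qed.

Lemma subst1_weight k r T T' :
  subst1 k r T T' -> forall rho, weight rho r < rho k -> weight rho T' < weight rho T.
Proof.
  induction 1 as [| ? ? ? ? ? _ IH | ? ? ? ? ? _ IH | k r t t' u _ IH | k r t u u' _ IH];
    intros rho Hr; simpl; auto.
  - specialize (IH rho Hr); lia.
  - specialize (IH rho Hr); lia.
  - enough (weight (scons (S (weight rho u)) rho) t' < weight (scons (S (weight rho u)) rho) t)
      by lia.
    apply IH. rewrite weight_ren. simpl. rewrite (weight_ext r _ rho) by reflexivity.
    assumption.
  - specialize (IH rho Hr).
    enough (weight (scons (S (weight rho u')) rho) t <= weight (scons (S (weight rho u)) rho) t)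
      by lia.
    apply weight_mono. intros [|n]; simpl; lia.
Qed.

Lemma wstep_e_weight t t' : wstep Ke t t' -> forall rho, weight rho t' < weight rho t.
Proof.
  induction 1 as [t t' Hr | | | a a' b _ IH | a b b' _ IH]; intros rho; simpl;
    try (specialize (IHwstep rho); lia).
  - inversion Hr as [| t0 t0' u Ht |]; subst; simpl.
    enough (weight (scons (S (weight rho u)) rho) t0'
            < weight (scons (S (weight rho u)) rho) t0)
      by lia.
    eapply subst1_weight; [eassumption |].
    rewrite weight_ren. simpl. rewrite (weight_ext u _ rho) by reflexivity. lia.
  - specialize (IH (scons (S (weight rho b)) rho)); lia.
  - specialize (IH rho).
    enough (weight (scons (S (weight rho b')) rho) a <= weight (scons (S (weight rho b)) rho) a)
      by lia.
    apply weight_mono. intros [|n]; simpl; lia.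
Qed.

Definition wstep_in (K : kind -> Prop) : relation term :=
  fun x y => exists k, K k /\ wstep k x y.

Lemma copies_non_e k R x y : k <> Ke -> copies k R x y -> clos_refl term R x y.
Proof. destruct k; simpl; [auto | congruence | auto]. Qed.

Lemma Confluent_wstep_e : Relations_3.Confluent term (wstep Ke).
Proof.
  apply Relations_3_facts.Newman.
  - apply (Noetherian_measure _ (weight (fun _ => 0))).
    intros; apply wstep_e_weight; assumption.
  - intros a b c Hb Hc. exact (wstep_local_commute _ _ _ _ _ Hb Hc).
Qed.

Lemma Confluent_wstep_in K :
  (forall k, K k -> k <> Ke) -> Relations_3.Confluent term (wstep_in K).
Proof.
  intros HK. apply Confluent_refl_diamond. intros a b c [k1 [K1 Hb]] [k2 [K2 Hc]].
  destruct (wstep_local_commute _ _ _ _ _ Hb Hc) as [d [Hbd Hcd]].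
  apply copies_non_e in Hbd, Hcd; auto.
  exists d; split; [destruct Hbd | destruct Hcd]; try apply r_refl;
    apply r_step; eexists; eauto.
Qed.

Lemma Confluent_wstep_e_union K :
  (forall k, K k -> k <> Ke) ->
  Relations_3.Confluent term (union term (wstep Ke) (wstep_in K)).
Proof.
  intros HK. apply Confluent_union.
  - apply Confluent_wstep_e.
  - apply Confluent_wstep_in, HK.
  - apply Rstar_commute. intros a b c Hb [k [Hk Hc]].
    destruct (wstep_local_commute _ _ _ _ _ Hb Hc) as [d [Hbd Hcd]].
    exists d; split.
    + apply (Rstar_hom id) with (2 := Hbd); intros.
      apply Rstar_contains_R; exists k; auto.
    + apply copies_non_e in Hcd; auto.
Qed.

Lemma root_m_kroot t t' : root_m t t' <-> kroot Km t t'.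
Proof.
  split; intros H.
  - destruct H. rewrite lift0_ren. constructor.
  - inversion H; subst. rewrite <- lift0_ren. constructor.
Qed.

Lemma root_e_kroot t t' : root_e t t' <-> kroot Ke t t'.
Proof.
  split; intros H.
  - destruct H as [w u]. constructor. rewrite lift0_ren, <- ren_add_S.
    exact (subst1_plugW w 0 (ren S u)).
  - inversion H as [| t0 t0' u Ht |]; subst.
    destruct (subst1_plugW_inv _ _ _ _ Ht) as [w [-> ->]].
    rewrite ren_add_S, <- lift0_ren. constructor.
Qed.

Lemma root_gcv_kroot t t' : root_gcv t t' <-> kroot Kg t t'.
Proof.
  split; intros H.
  - destruct H as [s t0 b]. rewrite !lift0_ren.
    change (ren (fun n => 1 + n) t0) with (ren S t0).
    rewrite <- ren_strengthen_S. constructor.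
    intros Hc. destruct (occurs_ren_inv _ _ _ Hc) as [m [_ E]]; discriminate.
  - inversion H as [| | s b T Hn]; subst.
    assert (Hsub : forall n, occurs n T -> S (pred n) = n)
      by (intros [|n] Hn'; [contradiction | reflexivity]).
    assert (ET : T = lift 1 0 (ren pred T)).
    { rewrite lift0_ren, ren_comp, <- (ren_id T) at 1.
      apply ren_ext_occurs; intros; symmetry; auto. }
    replace (ren (strengthen (length s)) T) with (lift (length s) 0 (ren pred T)).
    + rewrite ET at 1. constructor.
    + rewrite lift0_ren, ren_comp. reflexivity.
Qed.

Lemma wclos_wstep (R : relation term) k :
  (forall x y, R x y <-> kroot k x y) -> forall x y, wclos R x y <-> wstep k x y.
Proof.
  intros HR x y; split; intros H.
  - destruct H. apply wstep_plugW, wstep_root, HR; assumption.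
  - induction H as [| ? ? ? _ [w ? ?] | ? ? ? _ [w ? ?] | ? ? ? _ [w ? ?]
                    | ? ? ? _ [w ? ?]].
    + apply (WClos R Hole), HR; assumption.
    + apply (WClos R (WAppL w b)); assumption.
    + apply (WClos R (WAppR a w)); assumption.
    + apply (WClos R (WESL w b)); assumption.
    + apply (WClos R (WESR a w)); assumption.
Qed.

Lemma step_w_wstep x y :
  step_w x y <-> union term (wstep Ke) (wstep_in (fun k => k <> Ke)) x y.
Proof.
  unfold step_w, step_wm, step_we, step_wgcv, union, wstep_in.
  rewrite (wclos_wstep _ _ root_m_kroot), (wclos_wstep _ _ root_e_kroot),
    (wclos_wstep _ _ root_gcv_kroot).
  split.
  - intros [H|[H|H]]; [right; exists Km | left | right; exists Kg];
      auto; split; auto; discriminate.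
  - intros [H|[[] [Hk H]]]; auto; congruence.
Qed.

Lemma step_wngcv_wstep x y :
  step_wngcv x y <-> union term (wstep Ke) (wstep_in (fun k => k = Km)) x y.
Proof.
  unfold step_wngcv, step_wm, step_we, union, wstep_in.
  rewrite (wclos_wstep _ _ root_m_kroot), (wclos_wstep _ _ root_e_kroot).
  split.
  - intros [H|H]; [right; exists Km | left]; auto.
  - intros [H|[k [-> H]]]; auto.
Qed.

Theorem theorem4p8 : confluent step_w /\ confluent step_wngcv.
Proof.
  split; apply confluent_Confluent.
  - apply (Confluent_same_relation _ _ (fun x y => iff_sym (step_w_wstep x y))).
    apply Confluent_wstep_e_union; auto.
  - apply (Confluent_same_relation _ _ (fun x y => iff_sym (step_wngcv_wstep x y))).
    apply Confluent_wstep_e_union. intros k ->; discriminate.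
Qed.
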